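(* For every $i$, $s_{i+1}+r_{i+1}\leq s_i$.
   Context: Consider a finite rooted tree $T_0$ with node set $V_{\mathrm{int}}$; for a node $w$, $w'$ denotes its unique predecessor. Each node $v$ carries an integer $r_v$ (the exponential divergence rate of its multiplier $u_v$ as $t\to\infty$). Define recursively, starting from the end nodes (where $s_v:=0$), $s_v:=\sum_{w'=v}\max(0,n_w)$ and $n_v:=r_v+s_v$, computed in the original tree $T_0$. Build a sequence of trees: $T_0$ has root $v_0$; given $T_i$ with root $v_i$, choose a successor $v_{i+1}$ of $v_i$ in $T_i$ and form $T_{i+1}$ by contracting the line from $v_{i+1}$ to $v_i$: the node $v_i$ is erased, all subtrees originally entering $v_{i+1}$ are reattached to the root, together with the remaining subtrees entering $v_i$, and the root is renamed $v_{i+1}$ (carrying the multiplier $u_{v_{i+1}}$). Set $r_i:=r_{v_i}$ and $s_i:=\sum_{w\in T_i:\,w'=v_i}\max(0,n_w)$, where the sum is over the successors of the root $v_i$ in $T_i$ and the $n_w$ are those computed in $T_0$. *)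

From mathcomp Require Import all_boot all_order all_algebra.
Set Implicit Arguments. Unset Strict Implicit. Unset Printing Implicit Defensive.
Import Order.TTheory GRing.Theory Num.Theory.
Local Open Scope ring_scope.

(* A rooted tree on the finite node set V is given by a predecessor map
   [par : V -> option V]: [par w = Some w'] means w' is the predecessor of w,
   [par w = None] means w is the root (or, for later trees, an erased node). *)

Definition is_rooted_tree (V : finType) (par : V -> option V) (v0 : V) : Prop :=
  par v0 = None /\ (forall v, par v = None -> v = v0) /\
  (forall v, exists k, iter k (obind par) (Some v) = Some v0).

Definition succb (V : finType) (par : V -> option V) (v w : V) : bool :=
  par w == Some v.

(* The recursive definition  n_v = r_v + s_v,  s_v = sum_{w' = v} max(0, n_w)
   (computed in T_0).  On a finite rooted tree it determines n uniquely. *)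
Definition n_spec (V : finType) (par : V -> option V) (r : V -> int)
    (n : V -> int) : Prop :=
  forall v, n v = r v + \sum_(w | succb par v w) Num.max 0 (n w).

(* Contracting the edge from the root [v] to its successor [u]: the root [v]
   is erased (it gets no predecessor and no successors), every subtree that
   entered [v] now enters [u], subtrees entering [u] stay, and [u] becomes
   the root. *)
Definition contract (V : finType) (par : V -> option V) (v u : V) : V -> option V :=
  fun w => if w == u then None
           else if w == v then None
           else if par w == Some v then Some u else par w.

Fixpoint tree_seq (V : finType) (par0 : V -> option V) (vs : nat -> V) (i : nat)
    : V -> option V :=
  match i with
  | 0 => par0
  | i'.+1 => contract (tree_seq par0 vs i') (vs i') (vs i'.+1)
  end.

Definition s_seq (V : finType) (par0 : V -> option V) (vs : nat -> V)
    (n : V -> int) (i : nat) : int :=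
  \sum_(w | succb (tree_seq par0 vs i) (vs i) w) Num.max 0 (n w).

From mathcomp Require Import all_boot all_order all_algebra.
Import Order.TTheory GRing.Theory Num.Theory.
Set Implicit Arguments. Unset Strict Implicit. Unset Printing Implicit Defensive.
Local Open Scope ring_scope.

(* Contracting the edge from v_i to v_{i+1} makes the successors of v_{i+1}
   those of v_i other than v_{i+1}, together with the old successors of
   v_{i+1}; the latter are its successors in T_0, since every edge of T_i not
   pointing to the root v_i is an edge of T_0.  Hence
   s_{i+1} <= (s_i - max(0, n_{v_{i+1}})) + s_{v_{i+1}}, and
   r_{v_{i+1}} + s_{v_{i+1}} = n_{v_{i+1}} <= max(0, n_{v_{i+1}}). *)

Lemma ler_sum_predU (R : numDomainType) (I : finType) (P Q S : pred I)
    (F : I -> R) :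
  (forall i, 0 <= F i) -> (forall i, S i -> P i || Q i) ->
  \sum_(i | S i) F i <= \sum_(i | P i) F i + \sum_(i | Q i) F i.
Proof.
move=> F_ge0 subS; rewrite big_mkcond [X in _ <= X + _]big_mkcond.
rewrite [X in _ <= _ + X]big_mkcond -big_split /=.
apply: ler_sum => i _; case: ifP => [/subS /orP[]-> | _].
- by rewrite lerDl; case: ifP.
- by rewrite lerDr; case: ifP.
- by apply: addr_ge0; case: ifP.
Qed.

Lemma succb_contract (V : finType) (par : V -> option V) (v u w : V) :
  succb (contract par v u) u w =
  [&& w != u, w != v & succb par v w || succb par u w].
Proof.
rewrite /succb /contract.
case: (w =P u) => //= _; case: (w =P v) => //= _.
by case: ifP => // _; rewrite eqxx.
Qed.

Lemma n_le_max (V : finType) (par : V -> option V) (r n : V -> int) v :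
  n_spec par r n ->
  r v + \sum_(w | succb par v w) Num.max 0 (n w) <= Num.max 0 (n v).
Proof. by move=> n_rec; rewrite -n_rec le_max lexx orbT. Qed.

Section TreeSeq.

Variables (V : finType) (par0 : V -> option V) (vs : nat -> V).

Lemma tree_seq_root i : par0 (vs 0%N) = None -> tree_seq par0 vs i (vs i) = None.
Proof. by case: i => [|i] //= _; rewrite /contract eqxx. Qed.

Lemma tree_seq_par i w x :
  tree_seq par0 vs i w = Some x -> x != vs i -> par0 w = Some x.
Proof.
elim: i w x => [|i IH] w x //=.
rewrite /contract; case: (w == vs i.+1) => //; case: (w == vs i) => //.
case: eqP => [_ [<-]|par_wN Tw _]; first by rewrite eqxx.
apply: (IH _ _ Tw); apply/eqP => x_eq_v; apply: par_wN.
by rewrite Tw x_eq_v.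
Qed.

End TreeSeq.

Theorem mainTheorem3 (V : finType) (par0 : V -> option V) (v0 : V)
    (r : V -> int) (n : V -> int) (vs : nat -> V) (N : nat) :
  is_rooted_tree par0 v0 ->
  n_spec par0 r n ->
  vs 0%N = v0 ->
  (forall i : nat, (i < N)%N -> tree_seq par0 vs i (vs i.+1) = Some (vs i)) ->
  forall i : nat, (i < N)%N ->
    s_seq par0 vs n i.+1 + r (vs i.+1) <= s_seq par0 vs n i.
Proof.
move=> [root_v0 _] n_rec vs0 step i lt_iN.
have T_u := step i lt_iN.
set T := tree_seq par0 vs i in T_u *; set u := vs i.+1 in T_u *.
set v := vs i in T_u *; set f := fun w => Num.max 0 (n w).
have f_ge0 w : 0 <= f w by rewrite le_max lexx.
have u_neq_v : u != v.
  apply/eqP => u_eq_v; move: T_u.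
  by rewrite u_eq_v /T /v tree_seq_root ?vs0.
have succ_u w : succb (contract T v u) u w ->
    (succb T v w && (w != u)) || succb par0 u w.
  rewrite succb_contract => /and3P[w_neq_u _ /orP[-> | /eqP T_w]].
    by rewrite w_neq_u.
  by rewrite /succb (tree_seq_par T_w u_neq_v) eqxx orbT.
rewrite /s_seq /= -/T -/u -/v [X in _ <= X](bigD1 u) /=; last first.
  by rewrite /succb T_u.
apply: le_trans (lerD (n_le_max u n_rec) (lexx _)).
rewrite addrC -addrA lerD2l addrC.
exact: ler_sum_predU f_ge0 succ_u.
Qed.
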